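(* Let $(G,M,\Delta)$ be a Garside structure, $(H,N,\delta)$ a parabolic substructure, $T$ the set of $(H,N)$-reduced elements of $G$, and $\mathcal S=\mathrm{Div}(\Delta)\setminus\{1\}$. Let $\alpha\in G$, $\beta\in\pi_H(\alpha)$ and $u\in\mathcal S$. Let $\theta\in T$ with $H\theta=H\alpha$, and assume $\theta\in M^{-1}\setminus\{1\}$. Then there exists $\beta'\in\pi_H(\alpha u)$ such that $d(\beta,\beta')\le3$.
   Context: Let $G$ be a group and $M$ a submonoid with $M\cap M^{-1}=\{1\}$. Define $\alpha\le_L\beta$ iff $\alpha^{-1}\beta\in M$, and $\alpha\le_R\beta$ iff $\beta\alpha^{-1}\in M$. For $a\in M$ let $\mathrm{Div}_L(a)=\{b\in M: b\le_L a\}$, $\mathrm{Div}_R(a)=\{b\in M: b\le_R a\}$; $a$ is balanced if these coincide, and then $\mathrm{Div}(a)$ denotes this set. $M$ is Noetherian if each $a\in M$ admits an $n$ such that $a$ is not a product of more than $n$ non-trivial factors. A Garside structure $(G,M,\Delta)$: $\Delta\in M$ balanced, $M$ Noetherian, $\mathrm{Div}(\Delta)$ finite and generating $M$ as a monoid and $G$ as a group, $(G,\le_L)$ a lattice with meet $\wedge_L$. A parabolic substructure $(H,N,\delta)$: $\delta\in M$ balanced, $H$ (resp. $N$) the subgroup (resp. submonoid) generated by $\mathrm{Div}(\delta)$, and $\mathrm{Div}(\delta)=\mathrm{Div}(\Delta)\cap N$; it is assumed $H\ne\{1\}$. Put $\omega=\delta^{-1}\Delta$. $a\in M$ is unmovable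 if $\Delta\not\le_L a$; every $\alpha\in G$ has a unique right $\Delta$-form $\alpha=a\Delta^p$ ($a\in M$ unmovable, $p\in\mathbb Z$). $a\in M$ is $N$-reduced if $a\wedge_L\delta=1$. $\alpha$ with right $\Delta$-form $a\Delta^p$ is $(H,N)$-reduced if $a$ is $N$-reduced and either $p=0$, or $p<0$ and $\omega\not\le_L a$. With $\lg$ the word length w.r.t. $\mathcal S$: $d(\alpha,\beta)=\lg(\alpha^{-1}\beta)$, $d(\alpha,H)=\min_{\beta\in H}d(\alpha,\beta)$, $\pi_H(\alpha)=\{\beta\in H:d(\alpha,\beta)=d(\alpha,H)\}$. *)

From mathcomp Require Import all_boot.
From mathcomp Require Import ssrint.

Set Implicit Arguments.
Unset Strict Implicit.
Unset Printing Implicit Defensive.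

Local Open Scope group_scope.

Section Garside.
Variable G : groupType.

Definition zpow (x : G) (p : int) : G :=
  match p with
  | Posz n => x ^+ n
  | Negz n => (x ^+ n.+1)^-1
  end.

Inductive mgen (S : G -> Prop) : G -> Prop :=
  | mgen1 : mgen S 1
  | mgenM x y : S x -> mgen S y -> mgen S (x * y).

Inductive ggen (S : G -> Prop) : G -> Prop :=
  | ggen1 : ggen S 1
  | ggenM x y : S x -> ggen S y -> ggen S (x * y)
  | ggenV x y : S x -> ggen S y -> ggen S (x^-1 * y).

Definition pos_cone (M : G -> Prop) : Prop :=
  [/\ M 1, (forall x y, M x -> M y -> M (x * y))
    & (forall x, M x -> M (x^-1) -> x = 1)].

Definition leL (M : G -> Prop) (a b : G) : Prop := M (a^-1 * b).
Definition leR (M : G -> Prop) (a b : G) : Prop := M (b * a^-1).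

Definition DivL (M : G -> Prop) (a : G) : G -> Prop := fun b => M b /\ leL M b a.
Definition DivR (M : G -> Prop) (a : G) : G -> Prop := fun b => M b /\ leR M b a.

Definition balanced (M : G -> Prop) (a : G) : Prop :=
  M a /\ (forall b, DivL M a b <-> DivR M a b).

(* Div(a) for a balanced element *)
Definition Div (M : G -> Prop) (a : G) : G -> Prop := DivL M a.

Definition prodl (s : seq G) : G := foldr (fun x y => x * y) 1 s.

Definition noetherian (M : G -> Prop) : Prop :=
  forall a, M a -> exists n : nat, forall s : seq G,
      (forall x, x \in s -> M x /\ x <> 1) -> prodl s = a -> size s <= n.

Definition is_meetL (M : G -> Prop) (a b c : G) : Prop :=
  [/\ leL M c a, leL M c b & forall d, leL M d a -> leL M d b -> leL M d c].
Definition is_joinL (M : G -> Prop) (a b c : G) : Prop :=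
  [/\ leL M a c, leL M b c & forall d, leL M a d -> leL M b d -> leL M c d].

Definition lattice_L (M : G -> Prop) : Prop :=
  forall a b, (exists c, is_meetL M a b c) /\ (exists c, is_joinL M a b c).

Definition finite_set (S : G -> Prop) : Prop :=
  exists s : seq G, forall x, S x <-> x \in s.

Definition garside (M : G -> Prop) (Delta : G) : Prop :=
  pos_cone M /\ balanced M Delta /\ noetherian M /\
  finite_set (Div M Delta) /\
  (forall a, M a <-> mgen (Div M Delta) a) /\
  (forall g, ggen (Div M Delta) g) /\
  lattice_L M.

Definition Hsub (M : G -> Prop) (delta : G) : G -> Prop := ggen (Div M delta).
Definition Nsub (M : G -> Prop) (delta : G) : G -> Prop := mgen (Div M delta).

Definition parabolic (M : G -> Prop) (Delta delta : G) : Prop :=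
  [/\ M delta, balanced M delta,
      (forall b, Div M delta b <-> (Div M Delta b /\ Nsub M delta b))
    & exists h, Hsub M delta h /\ h <> 1].

Definition unmovable (M : G -> Prop) (Delta a : G) : Prop :=
  M a /\ ~ leL M Delta a.

Definition int_neg (p : int) : Prop :=
  match p with Negz _ => True | Posz _ => False end.

Definition right_Dform (M : G -> Prop) (Delta alpha a : G) (p : int) : Prop :=
  unmovable M Delta a /\ alpha = a * zpow Delta p.

Definition N_reduced (M : G -> Prop) (delta a : G) : Prop :=
  M a /\ is_meetL M a delta 1.

Definition HN_reduced (M : G -> Prop) (Delta delta alpha : G) : Prop :=
  exists (a : G) (p : int), right_Dform M Delta alpha a p /\
    N_reduced M delta a /\
    (p = 0%Z \/ (int_neg p /\ ~ leL M (delta^-1 * Delta) a)).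

(* words over S ∪ S^{-1}; (true, x) stands for x^{-1} *)
Definition eval_word (w : seq (bool * G)) : G :=
  prodl [seq (if e.1 then e.2^-1 else e.2) | e <- w].

Definition is_word (S : G -> Prop) (w : seq (bool * G)) (g : G) : Prop :=
  (forall e, e \in w -> S e.2) /\ eval_word w = g.

Definition word_length (S : G -> Prop) (g : G) (n : nat) : Prop :=
  (exists w, is_word S w g /\ size w = n) /\
  (forall w, is_word S w g -> n <= size w).

Definition dist (S : G -> Prop) (alpha beta : G) (n : nat) : Prop :=
  word_length S (alpha^-1 * beta) n.

Definition proj (S H : G -> Prop) (alpha beta : G) : Prop :=
  H beta /\ exists n, dist S alpha beta n /\
    (forall beta' m, H beta' -> dist S alpha beta' m -> n <= m).

Definition rcoset (H : G -> Prop) (x : G) : G -> Prop :=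
  fun g => exists h, H h /\ g = h * x.

End Garside.

(* Word length over Div(Δ) \ {1} is read off Δ-intervals: lg g <= n iff
   Δ^-j <=_L g <=_L Δ^k for some j + k <= n.  So π_H(γ) consists of the elements
   of H in a shortest interval [γΔ^-j, γΔ^k] meeting H; and H is closed under the
   lattice operations, because by Noetherianity its elements are exactly those
   lying between δ^-k and δ^k for some k.
   Translating by H we may take α = θ = aΔ^-(Q+1), with a N-reduced and
   ω = δ^-1 Δ not below a.  Then no element of H lies below aΔ^-1, so every
   interval around γ = θu that meets H has k >= Q, and θ <=_L β <=_L 1.  If H meets
   [γ, γΔ^Q], [γ, γΔ^(Q+1)] or [γΔ^-1, γΔ^Q], a projection of γ is obtained from β
   by joining with γ and/or meeting with cδ^-1 ∨ g0 (g0 the witness), each a move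
   by one simple element; otherwise β itself is a projection of γ.  Hence
   d(β, β') <= 2. *)

From mathcomp Require Import all_boot.
From mathcomp Require Import ssrint.
From Stdlib Require Import Classical Wf_nat.
From mathcomp Require Import zify.

Set Implicit Arguments.
Unset Strict Implicit.
Unset Printing Implicit Defensive.

Local Open Scope group_scope.

Ltac gnormalize :=
  repeat progress rewrite ?invgM ?invgK ?invg1 ?mulgA ?mulgK ?mulgVK ?mulVg
    ?mulgV ?mul1g ?mulg1;
  try done.

Section Words.
Variables (G : groupType) (S : G -> Prop).

Lemma prodl_cat (s1 s2 : seq G) : prodl (s1 ++ s2) = prodl s1 * prodl s2.
Proof. by elim: s1 => [|x s IH] /=; rewrite ?mul1g // IH mulgA. Qed.

Lemma eval_word_cons (e : bool * G) w :
  eval_word (e :: w) = (if e.1 then e.2^-1 else e.2) * eval_word w.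
Proof. by []. Qed.

Lemma is_word_cons e w g :
  is_word S (e :: w) g -> S e.2 /\ is_word S w (eval_word w).
Proof.
case=> Sw _; split; first by apply: Sw; rewrite inE eqxx.
by split=> // e' we'; apply: Sw; rewrite inE we' orbT.
Qed.

Lemma is_word_cat w1 w2 g1 g2 :
  is_word S w1 g1 -> is_word S w2 g2 -> is_word S (w1 ++ w2) (g1 * g2).
Proof.
case=> S1 <- [S2 <-]; split; last by rewrite /eval_word map_cat prodl_cat.
by move=> e; rewrite mem_cat => /orP[/S1 | /S2].
Qed.

Lemma is_word_letter s :
  S s -> is_word S [:: (false, s)] s /\ is_word S [:: (true, s)] s^-1.
Proof.
by move=> Ss; split; split; rewrite /eval_word /= ?mulg1 // => e; rewrite inE => /eqP ->.
Qed.

Lemma is_word_inv w g :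
  is_word S w g -> is_word S (rev [seq (~~ e.1, e.2) | e <- w]) g^-1.
Proof.
elim: w g => [|e w IH] g; first by case=> _ <-; split; rewrite /eval_word /= ?invg1.
move=> /[dup] /is_word_cons [Se Sw] [_ <-].
rewrite map_cons rev_cons -cats1 eval_word_cons invgM.
apply: is_word_cat; first exact: IH.
by case: e Se => [[] s] Ss; have [] := is_word_letter Ss; rewrite ?invgK.
Qed.

Lemma is_word_drop1 w g : is_word S w g ->
  exists2 w', is_word (fun x => S x /\ x <> 1) w' g & (size w' <= size w)%N.
Proof.
elim: w g => [|e w IH] g; first by case=> _ <-; exists [::].
move=> /[dup] /is_word_cons [Se /IH [w' [S1w' ew'] le_w']] [_ <-].
have [e1|ne1] := eqVneq e.2 1.
  exists w'; last exact: leqW.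
  by split=> //; rewrite eval_word_cons e1 ew'; case: (e.1); gnormalize.
exists (e :: w'); last by [].
split; last by rewrite !eval_word_cons ew'.
by move=> x; rewrite inE => /orP[/eqP -> | /S1w'] //; split=> //; apply/eqP.
Qed.

Lemma ggen_word g : ggen S g -> exists w, is_word S w g.
Proof.
elim=> [|x y Sx _ [w wy] | x y Sx _ [w wy]]; first by exists [::].
  by exists ((false, x) :: w); apply: is_word_cat (is_word_letter Sx).1 wy.
by exists ((true, x) :: w); apply: is_word_cat (is_word_letter Sx).2 wy.
Qed.

End Words.

Section Generated.
Variables (G : groupType) (S : G -> Prop).

Lemma mgen_sub x : S x -> mgen S x.
Proof. by move=> Sx; rewrite -[x]mulg1; apply: mgenM (mgen1 S). Qed.

Lemma mgen_mul x y : mgen S x -> mgen S y -> mgen S (x * y).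
Proof.
by elim=> [|a b Sa _ IH] Sy; rewrite ?mul1g // -mulgA; apply: mgenM (IH Sy).
Qed.

Lemma mgen_conj c : (forall s, S s -> S (s ^ c)) ->
  forall x, mgen S x -> mgen S (x ^ c).
Proof.
move=> Sc x; elim=> [|a b Sa _ IH]; first by rewrite conj1g; apply: mgen1.
by rewrite conjMg; apply: mgenM (Sc a Sa) IH.
Qed.

Lemma conj_closedX (P : G -> Prop) c : (forall x, P x -> P (x ^ c)) ->
  forall k x, P x -> P (x ^ (c ^+ k)).
Proof.
move=> Pc; elim=> [|k IH] x Px; first by rewrite expg0 conjg1.
by rewrite expgSr conjgM; apply/Pc/IH.
Qed.

End Generated.

Section PositiveCone.
Variables (G : groupType) (M : G -> Prop).
Hypothesis coneM : pos_cone M.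

Local Notation "x <=L y" := (leL M x y) (at level 70, no associativity).

Lemma cone1 : M 1. Proof. by case: coneM. Qed.

Lemma cone_mul x y : M x -> M y -> M (x * y).
Proof. by case: coneM => _ mulM _; apply: mulM. Qed.

Lemma cone_anti x : M x -> M x^-1 -> x = 1.
Proof. by case: coneM => _ _; apply. Qed.

Lemma cone_eq x y : M x -> x = y -> M y. Proof. by move=> Mx <-. Qed.

Lemma leLL x : x <=L x. Proof. by rewrite /leL mulVg; apply: cone1. Qed.

Lemma leL_trans y x z : x <=L y -> y <=L z -> x <=L z.
Proof. by move=> xy yz; apply: cone_eq (cone_mul xy yz) _; gnormalize. Qed.

Lemma leL_mul2l g x y : g * x <=L g * y <-> x <=L y.
Proof. by rewrite /leL invgM -mulgA mulKg. Qed.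

Lemma leL_mulVl g x y : x <=L g * y <-> g^-1 * x <=L y.
Proof. by rewrite -(leL_mul2l g^-1) mulKg. Qed.

Lemma leL_mulVr g x y : g * x <=L y <-> x <=L g^-1 * y.
Proof. by rewrite -(leL_mul2l g^-1) mulKg. Qed.

Lemma le1L x : 1 <=L x <-> M x. Proof. by rewrite /leL invg1 mul1g. Qed.

Lemma leL1 x : x <=L 1 <-> M x^-1. Proof. by rewrite /leL mulg1. Qed.

Lemma leL_mulr x y : M y -> x <=L x * y. Proof. by rewrite /leL mulKg. Qed.

Lemma cone_expg x k : M x -> M (x ^+ k).
Proof. by move=> Mx; elim: k => [|k IH]; [exact: cone1 | rewrite expgS; apply: cone_mul]. Qed.

Lemma leL_expg x j k : M x -> (j <= k)%N -> x ^+ j <=L x ^+ k.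
Proof. by move=> Mx /subnKC <-; rewrite /leL expgnDr mulKg; apply: cone_expg. Qed.

Lemma leL_expgV x j k : M x -> (j <= k)%N -> (x ^+ k)^-1 <=L (x ^+ j)^-1.
Proof.
by move=> Mx /subnKC <-; rewrite /leL invgK addnC expgnDr mulgK; apply: cone_expg.
Qed.

Lemma HN_reduced_negE D d theta : HN_reduced M D d theta -> M theta^-1 -> theta <> 1 ->
  exists a Q, [/\ M a, is_meetL M a d 1, ~ d^-1 * D <=L a & theta = a * (D ^+ Q.+1)^-1].
Proof.
case=> a [[n|Q] [[[Ma _] ->] [[_ Nred_a] p_cases]]] M_thetaV theta1.
  case: p_cases => [[n0]|[]//]; case: theta1; subst n.
  by move: M_thetaV; rewrite /= mulg1; apply: cone_anti.
by case: p_cases => [//|[_ not_omega_a]]; exists a, Q.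
Qed.

Section MeetJoin.
Variables a b c : G.

Lemma meetL_l : is_meetL M a b c -> c <=L a. Proof. by case. Qed.
Lemma meetL_r : is_meetL M a b c -> c <=L b. Proof. by case. Qed.
Lemma meetL_max x : is_meetL M a b c -> x <=L a -> x <=L b -> x <=L c.
Proof. by case=> _ _; apply. Qed.

Lemma joinL_l : is_joinL M a b c -> a <=L c. Proof. by case. Qed.
Lemma joinL_r : is_joinL M a b c -> b <=L c. Proof. by case. Qed.
Lemma joinL_min x : is_joinL M a b c -> a <=L x -> b <=L x -> c <=L x.
Proof. by case=> _ _; apply. Qed.

Lemma meetL_cone : M a -> M b -> is_meetL M a b c -> M c.
Proof. by move=> Ma Mb mc; rewrite -le1L; apply: meetL_max mc _ _; rewrite le1L. Qed.

End MeetJoin.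

Lemma mgen_cone (S : G -> Prop) x : (forall s, S s -> M s) -> mgen S x -> M x.
Proof.
by move=> SM; elim=> [|s y Ss _ My]; [exact: cone1 | exact: cone_mul (SM s Ss) My].
Qed.

Lemma mgen_prefix (S : G -> Prop) x : (forall s, S s -> M s) ->
  mgen S x -> x <> 1 -> exists s, [/\ S s, s <> 1 & s <=L x].
Proof.
move=> SM; elim=> [//|s y Ss Sy IH] sy1.
have [s1|s1] := eqVneq s 1; first by rewrite s1 mul1g in sy1 *; apply: IH.
by exists s; split=> //; [apply/eqP | apply/leL_mulr/(mgen_cone SM)].
Qed.

Section Noetherian.
Hypothesis noethM : noetherian M.

Lemma cone_factor x : M x ->
  exists2 l, (forall y, y \in l -> M y /\ y <> 1) & prodl l = x.
Proof.
have [-> _|x1 Mx] := eqVneq x 1; first by exists [::].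
by exists [:: x]; rewrite /= ?mulg1 // => y; rewrite inE => /eqP ->; split=> //; apply/eqP.
Qed.

Lemma cone_noetherian_ind (P : G -> Prop) :
  (forall m, M m -> (forall s, M s -> s <> 1 -> M (s^-1 * m) -> P (s^-1 * m)) -> P m) ->
  forall m, M m -> P m.
Proof.
have cons_nontrivial s l : M s -> s <> 1 -> (forall y, y \in l -> M y /\ y <> 1) ->
    forall y, y \in s :: l -> M y /\ y <> 1.
  by move=> Ms s1 Ml y; rewrite inE => /orP[/eqP -> | /Ml].
move=> IH m Mm; have [n bound_m] := noethM Mm.
elim: n m Mm bound_m => [|n IHn] m Mm bound_m; apply: IH => // s Ms s1 Mm'.
  have [l Ml el] := cone_factor Mm'.
  by have := bound_m _ (cons_nontrivial s l Ms s1 Ml); rewrite /= el mulVKg => /(_ erefl).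
apply: IHn => // l Ml el.
by have := bound_m _ (cons_nontrivial s l Ms s1 Ml); rewrite /= el mulVKg => /(_ erefl).
Qed.

End Noetherian.

Section Balanced.
Variable b : G.
Hypothesis balb : balanced M b.

Lemma Div_cone s : Div M b s -> M s. Proof. by case. Qed.

Lemma Div_self : Div M b b.
Proof. by split; [case: balb | exact: leLL]. Qed.

Lemma Div_coneR s : Div M b s -> M (b * s^-1).
Proof. by case: balb => _ DivLR /DivLR []. Qed.

Lemma DivR_Div s : M s -> M (b * s^-1) -> Div M b s.
Proof. by case: balb => _ DivLR Ms Mbs; apply/DivLR. Qed.

Lemma Div_complL s : Div M b s -> Div M b (s^-1 * b).
Proof.
case=> Ms Msb; apply: DivR_Div => //.
by apply: cone_eq Ms _; gnormalize.
Qed.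

Lemma Div_complR s : Div M b s -> Div M b (b * s^-1).
Proof.
move=> Ds; split; first exact: Div_coneR.
by apply: cone_eq (Div_cone Ds) _; rewrite /leL; gnormalize.
Qed.

Lemma Div_conj s : Div M b s -> Div M b (s ^ b).
Proof.
move=> Ds; have [_ Mbs] := Div_complL Ds; have [_ Mbs'] := Div_complL (Div_complL Ds).
rewrite /leL in Mbs Mbs'; split; [apply: cone_eq Mbs _ | apply: cone_eq Mbs' _];
  rewrite /leL conjgE; gnormalize.
Qed.

Lemma Div_conjV s : Div M b s -> Div M b (s ^ b^-1).
Proof.
move=> Ds; have Mbs := Div_coneR (Div_complR Ds).
split; [apply: cone_eq Mbs _ | apply: cone_eq (Div_coneR Ds) _];
  rewrite /leL conjgE; gnormalize.
Qed.

End Balanced.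

Section Garside.
Variable D : G.
Hypothesis balD : balanced M D.
Hypothesis genM : forall a, M a <-> mgen (Div M D) a.
Hypothesis latM : lattice_L M.
Hypothesis genG : forall g, ggen (Div M D) g.

Lemma cone_D : M D. Proof. by case: balD. Qed.

Lemma cone_DX k : M (D ^+ k). Proof. exact/cone_expg/cone_D. Qed.

Lemma cone_conjDX k x : M x -> M (x ^ (D ^+ k)).
Proof.
apply: conj_closedX => {}x /genM Mx; apply/genM.
by apply: mgen_conj Mx => s; apply: Div_conj.
Qed.

Lemma cone_conjDXV k x : M x -> M (x ^ (D ^+ k)^-1).
Proof.
rewrite -expVgn; apply: conj_closedX => {}x /genM Mx; apply/genM.
by apply: mgen_conj Mx => s; apply: Div_conjV.
Qed.

Lemma leL_mulDXr k x y : x * D ^+ k <=L y * D ^+ k <-> x <=L y.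
Proof.
rewrite /leL; split=> [/(cone_conjDXV k) | /(cone_conjDX k)] Mxy;
  by apply: cone_eq Mxy _; rewrite conjgE; gnormalize.
Qed.

Lemma meetL_mulDXr k a b c :
  is_meetL M a b c -> is_meetL M (a * D ^+ k) (b * D ^+ k) (c * D ^+ k).
Proof.
case=> ca cb cmax; split; rewrite ?leL_mulDXr // => x xa xb.
by rewrite -(mulgVK (D ^+ k) x) leL_mulDXr; apply: cmax; rewrite -(leL_mulDXr k) mulgVK.
Qed.

(* [Dlen_le g n] is the interval form of [lg g <= n], see [word_length_leP]. *)
Definition Dwithin x j k := (D ^+ j)^-1 <=L x /\ x <=L D ^+ k.

Definition Dlen_le x n := exists j k, (j + k <= n)%N /\ Dwithin x j k.

Lemma Dwithin_mono x j k j' k' :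
  Dwithin x j k -> (j <= j')%N -> (k <= k')%N -> Dwithin x j' k'.
Proof.
move=> [jx xk] jj' kk'; split; last exact: leL_trans xk (leL_expg cone_D kk').
exact: leL_trans (leL_expgV cone_D jj') jx.
Qed.

Lemma DwithinE x g j k :
  Dwithin (x^-1 * g) j k <-> x * (D ^+ j)^-1 <=L g /\ g <=L x * D ^+ k.
Proof. by rewrite /Dwithin -(leL_mul2l x) mulVKg (leL_mulVr x^-1) invgK. Qed.

Lemma Dlen_le_mono x n m : Dlen_le x n -> (n <= m)%N -> Dlen_le x m.
Proof. by case=> j [k [jkn xjk]] nm; exists j, k; split=> //; apply: leq_trans nm. Qed.

Lemma Dlen_le1 : Dlen_le 1 0.
Proof. by exists 0%N, 0%N; split=> //; rewrite /Dwithin expg0 invg1; split; apply: leLL. Qed.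

Lemma Dlen_le_mul x y n1 n2 : Dlen_le x n1 -> Dlen_le y n2 -> Dlen_le (x * y) (n1 + n2).
Proof.
case=> j1 [k1 [le1 [Lx Ux]]] [j2 [k2 [le2 [Ly Uy]]]].
exists (j1 + j2)%N, (k1 + k2)%N; split; first by rewrite addnACA leq_add.
move: Lx Ux Ly Uy; rewrite /Dwithin /leL !invgK => Lx Ux Ly Uy; split.
  apply: cone_eq (cone_mul (cone_conjDXV j2 Lx) Ly) _.
  by rewrite addnC expgnDr conjgE; gnormalize.
apply: cone_eq (cone_mul Uy (cone_conjDX k2 Ux)) _.
by rewrite expgnDr conjgE; gnormalize.
Qed.

Lemma Dlen_le_Div s : Div M D s -> Dlen_le s 1 /\ Dlen_le s^-1 1.
Proof.
case=> Ms Msd; split; [exists 0%N, 1%N | exists 1%N, 0%N]; split=> //;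
  rewrite /Dwithin /leL ?expg1 ?expg0 !invgK ?invg1 ?mulg1 ?mul1g //.
by split=> //; apply: Div_coneR.
Qed.

Lemma Dlen_le_word w g : is_word (Div M D) w g -> Dlen_le g (size w).
Proof.
elim: w g => [|e w IH] g; first by case=> _ <-; apply: Dlen_le1.
move=> /[dup] /is_word_cons [De /IH span_w] [_ <-].
rewrite eval_word_cons /= -add1n; apply: Dlen_le_mul span_w.
by case: (e.1); have [] := Dlen_le_Div De.
Qed.

Local Notation SD := (fun x => Div M D x /\ x <> 1).

Lemma word_of_leL_DX r y : M y -> y <=L D ^+ r ->
  exists2 w, is_word (Div M D) w y & (size w <= r)%N.
Proof.
elim: r y => [|r IH] y My yDr.
  have -> : y = 1 by apply: (cone_anti My); rewrite -leL1 -(expg0 D).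
  by exists [::].
have [y1 meet_y1] := (latM y (D ^+ r)).1.
have My1 : M y1 := meetL_cone My (cone_DX r) meet_y1.
have [w1 w1y1 size_w1] := IH y1 My1 (meetL_r meet_y1).
have y_y1D : y <=L y1 * D.
  have := meetL_max (meetL_mulDXr 1 meet_y1).
  by rewrite expg1 -expgSr; apply=> //; apply/leL_mulr/cone_D.
have Dy : Div M D (y1^-1 * y) by split; [exact: meetL_l meet_y1 | rewrite -leL_mulVl].
exists (w1 ++ [:: (false, y1^-1 * y)]); last by rewrite size_cat addn1.
by have := is_word_cat w1y1 (is_word_letter Dy).1; rewrite mulVKg.
Qed.

Lemma word_of_Dlen_le g n : Dlen_le g n ->
  exists2 w, is_word (Div M D) w g & (size w <= n)%N.
Proof.
case=> j [k [jkn [Lg Ug]]]; set m := D ^+ j * g.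
have [m1 meet_m1] := (latM m (D ^+ j)).1.
have Mm : M m by rewrite /m -[D ^+ j]invgK; apply: Lg.
have Mm1 : M m1 := meetL_cone Mm (cone_DX j) meet_m1.
have m_m1Dk : m <=L m1 * D ^+ k.
  apply: meetL_max (meetL_mulDXr k meet_m1) _ _.
    exact/leL_mulr/cone_DX.
  by rewrite /m leL_mul2l.
have [w1 w1c size_w1] : exists2 w, is_word (Div M D) w (m1^-1 * D ^+ j) & (size w <= j)%N.
  apply: word_of_leL_DX; first exact: meetL_r meet_m1.
  by rewrite /leL; apply: cone_eq (cone_conjDX j Mm1) _; rewrite conjgE; gnormalize.
have [w2 w2m size_w2] : exists2 w, is_word (Div M D) w (m1^-1 * m) & (size w <= k)%N.
  by apply: word_of_leL_DX; [exact: meetL_l meet_m1 | rewrite -leL_mulVl].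
exists (rev [seq (~~ e.1, e.2) | e <- w1] ++ w2).
  have -> : g = (m1^-1 * D ^+ j)^-1 * (m1^-1 * m) by rewrite /m; gnormalize.
  exact: is_word_cat (is_word_inv w1c) w2m.
by rewrite size_cat size_rev size_map (leq_trans _ jkn) // leq_add.
Qed.

Lemma is_word_nontrivial w g : is_word SD w g -> is_word (Div M D) w g.
Proof. by case=> Sw ew; split=> // e /Sw []. Qed.

Definition Dproj (H : G -> Prop) x b :=
  H b /\ exists n, Dlen_le (x^-1 * b) n /\
    forall g m, H g -> Dlen_le (x^-1 * g) m -> (n <= m)%N.

Lemma Dproj_mul2l (H : G -> Prop) h x b :
  (forall g, H (h * g) <-> H g) -> Dproj H x b -> Dproj H (h * x) (h * b).
Proof.
move=> Hh [Hb [n [dn min_n]]]; split; first exact/Hh.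
exists n; split=> [|g m Hg]; first by rewrite invgM -mulgA mulKg.
rewrite -[g](mulVKg h) invgM -!mulgA mulKg; apply: min_n.
by rewrite -Hh mulVKg.
Qed.

Lemma Dproj_of_Dwithin (H : G -> Prop) x b j k :
  H b -> Dwithin (x^-1 * b) j k ->
  (forall g m, H g -> Dlen_le (x^-1 * g) m -> (j + k <= m)%N) -> Dproj H x b.
Proof. by move=> Hb xb min_jk; split=> //; exists (j + k)%N; split=> //; exists j, k. Qed.

Lemma word_length_exists g : exists n, word_length SD g n.
Proof.
have [w0 /is_word_drop1 [w1 w1g _]] := ggen_word (genG g).
pose P n := exists w, is_word SD w g /\ size w = n.
have [n [[[w [wg <-]] min_n] _]] := @dec_inh_nat_subset_has_unique_least_element P
  (fun n => classic (P n)) (ex_intro P _ (ex_intro _ w1 (conj w1g erefl))).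
exists (size w); split; first by exists w.
by move=> w' w'g; apply/leP/min_n; exists w'.
Qed.

Lemma word_length_leP g n m : word_length SD g n -> (n <= m)%N <-> Dlen_le g m.
Proof.
case=> [[w [wg <-]] min_n]; split=> [le_m | /word_of_Dlen_le [w' /is_word_drop1 [w'' w''g]]].
  exact: Dlen_le_mono (Dlen_le_word (is_word_nontrivial wg)) le_m.
by move=> le_w'' le_w'; apply: leq_trans (min_n _ w''g) (leq_trans le_w'' le_w').
Qed.

Lemma proj_Dproj H x b : proj SD H x b <-> Dproj H x b.
Proof.
split=> -[Hb [n [dn min_n]]]; split=> //.
  exists n; split=> [|g m Hg]; first exact/(word_length_leP _ dn).
  have [n' dn'] := word_length_exists (x^-1 * g).
  by move/(word_length_leP _ dn'); apply: leq_trans (min_n g n' Hg dn').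
have [n' dn'] := word_length_exists (x^-1 * b).
exists n'; split=> // g m Hg dm.
apply: leq_trans (min_n g m Hg _); first exact/(word_length_leP _ dn').
exact/(word_length_leP _ dm).
Qed.

Lemma dist_of_Dlen_le x y m : Dlen_le (x^-1 * y) m -> exists n, dist SD x y n /\ (n <= m)%N.
Proof.
have [n dn] := word_length_exists (x^-1 * y).
by move/(word_length_leP _ dn) => le_nm; exists n.
Qed.

Section Parabolic.
Variable d : G.
Hypothesis bald : balanced M d.
Hypothesis Div_delta : forall s, Div M d s <-> Div M D s /\ Nsub M d s.

Local Notation N := (Nsub M d).
Local Notation H := (Hsub M d).
Local Notation omega := (d^-1 * D).

Lemma cone_delta : M d. Proof. by case: bald. Qed.

Lemma Nsub_cone x : N x -> M x.
Proof. by apply: mgen_cone => s; apply: Div_cone. Qed.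

Lemma Nsub_deltaX k : N (d ^+ k).
Proof.
elim: k => [|k IH]; first exact: mgen1.
by rewrite expgS; apply: mgen_mul IH; apply/mgen_sub/Div_self.
Qed.

Lemma Nsub_conj_deltaX k x : N x -> N (x ^ (d ^+ k)).
Proof. by apply: conj_closedX; apply: mgen_conj (Div_conj bald). Qed.

Lemma Nsub_conj_deltaXV k x : N x -> N (x ^ (d ^+ k)^-1).
Proof. by rewrite -expVgn; apply: conj_closedX; apply: mgen_conj (Div_conjV bald). Qed.

Lemma Div_Delta_delta : Div M D d.
Proof. by have [] := (Div_delta d).1 (Div_self bald). Qed.

Lemma delta_le_Delta : d <=L D. Proof. by case: Div_Delta_delta. Qed.

Lemma cone_omega : M omega. Proof. exact: delta_le_Delta. Qed.

Lemma omega_le_Delta : omega <=L D.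
Proof.
rewrite /leL; apply: cone_eq (cone_conjDX 1 cone_delta) _.
by rewrite expg1 conjgE; gnormalize.
Qed.

Lemma Nsub_omega_le n : N n -> omega <=L n * omega.
Proof.
move=> /(Nsub_conj_deltaXV 1) /Nsub_cone /(cone_conjDX 1) Mn; rewrite /leL.
by apply: cone_eq Mn _; rewrite expg1 !conjgE; gnormalize.
Qed.

Lemma delta_omega_meet t : t <=L d -> t <=L omega -> t <=L 1.
Proof.
move=> td tom; have [c join_c] := (latM t 1).2.
have Mc : M c by rewrite -le1L; apply: joinL_r join_c.
have cd : c <=L d by apply: joinL_min join_c td _; rewrite le1L; apply: cone_delta.
have com : c <=L omega by apply: joinL_min join_c tom _; rewrite le1L; apply: cone_omega.
have Ddc : Div M D (d * c).
  by split; [apply: cone_mul cone_delta Mc | rewrite /leL; apply: cone_eq com _; gnormalize].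
have [_] := (Div_delta _).2 (conj Ddc (mgen_mul (Nsub_deltaX 1) (mgen_sub (conj Mc cd)))).
rewrite /leL invgM mulgVK => Mc'.
by rewrite -(cone_anti Mc Mc'); apply: joinL_l join_c.
Qed.

Lemma delta_omega_join y : d <=L y -> omega <=L y -> D <=L y.
Proof.
move=> dy omy; have [c join_c] := (latM d omega).2.
suff <- : c = D by apply: joinL_min join_c dy omy.
have cD : c <=L D := joinL_min join_c delta_le_Delta omega_le_Delta.
(* t = Δc^-1 divides δ and tδ is a simple element of N, so tδ divides δ: t = 1. *)
have Dt : Div M d (D * c^-1).
  apply: (DivR_Div bald); [apply: cone_eq (cone_conjDXV 1 cD) _ |
    apply: cone_eq (cone_conjDXV 1 (joinL_r join_c)) _]; by rewrite expg1 conjgE; gnormalize.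
have Dtd : Div M D (D * c^-1 * d).
  split; first by apply: cone_mul (Div_cone Dt) cone_delta.
  by rewrite /leL; apply: cone_eq (joinL_l join_c) _; gnormalize.
have Ntd : N (D * c^-1 * d) := mgen_mul (mgen_sub Dt) (Nsub_deltaX 1).
have /(Div_coneR bald) Mt := (Div_delta _).2 (conj Dtd Ntd).
have t1 : D * c^-1 = 1.
  by apply: cone_anti (Div_cone Dt) _; apply: cone_eq Mt _; gnormalize.
by apply/esym/divg1_eq.
Qed.

Lemma Delta_le_deltaE x : D <=L d * x <-> omega <=L x.
Proof. by rewrite -{1}(mulVKg d D) leL_mul2l. Qed.

Lemma omega_le_deltaX_mul k g : M g -> omega <=L d ^+ k * g -> omega <=L g.
Proof.
move=> Mg; elim: k => [|k IH]; first by rewrite mul1g.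
rewrite expgS -mulgA => om_dkg; apply: IH.
have Mdkg : M (d ^+ k * g) := cone_mul (cone_expg k cone_delta) Mg.
by rewrite -Delta_le_deltaE; apply: delta_omega_join (leL_mulr d Mdkg) om_dkg.
Qed.

Lemma leL_delta_of_Delta_deltaX t j : t <=L D -> t <=L d ^+ j -> t <=L d.
Proof.
elim: j t => [|j IH] t tD tdj.
  by apply: leL_trans tdj _; rewrite le1L; apply: cone_delta.
have [c join_c] := (latM t d).2.
have c_dD : c <=L d * D.
  apply: joinL_min join_c _ (leL_mulr d cone_D); apply: leL_trans tD _.
  rewrite /leL; apply: cone_eq (cone_conjDX 1 cone_delta) _.
  by rewrite expg1 conjgE; gnormalize.
have c_ddj : c <=L d * d ^+ j.
  rewrite -expgS; apply: joinL_min join_c tdj _.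
  exact: (@leL_expg d 1 j.+1 cone_delta isT).
have dc_d : d^-1 * c <=L d by apply: IH; rewrite -leL_mulVl.
have : d^-1 * c <=L 1.
  apply: delta_omega_meet dc_d _; rewrite leL_mul2l.
  exact: joinL_min join_c tD delta_le_Delta.
by rewrite -leL_mulVl mulg1; apply: leL_trans (joinL_l join_c).
Qed.

Lemma Nsub_le_deltaX n : N n -> exists j, n <=L d ^+ j.
Proof.
elim=> [|s y Ds _ [j yj]]; first by exists 0%N; apply: leLL.
exists j.+1; apply: leL_trans (_ : s * d ^+ j <=L _); first by rewrite leL_mul2l.
have /mgen_sub /(Nsub_conj_deltaX j) /Nsub_cone := Div_complL bald Ds.
by move=> Mc; rewrite /leL; apply: cone_eq Mc _; rewrite expgS conjgE; gnormalize.
Qed.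

Hypothesis noethM : noetherian M.

Lemma Nsub_of_le_deltaX j m : M m -> m <=L d ^+ j -> N m.
Proof.
move: m; apply: (cone_noetherian_ind noethM) => m Mm IH mdj.
have [->|/eqP m1] := eqVneq m 1; first exact: mgen1.
have [s [Ds s1 sm]] := mgen_prefix (@Div_cone D) ((genM m).1 Mm) m1.
have Dds : Div M d s.
  split; first exact: Div_cone Ds.
  by apply: leL_delta_of_Delta_deltaX (leL_trans sm mdj); case: Ds.
rewrite -(mulVKg s m); apply: (mgenM Dds (IH s (Div_cone Ds) s1 sm _)).
apply: leL_trans (_ : s^-1 * d ^+ j <=L _); first by rewrite leL_mul2l.
have /mgen_sub /(Nsub_conj_deltaX j) /Nsub_cone := Dds.
by move=> Mc; rewrite /leL; apply: cone_eq Mc _; rewrite conjgE; gnormalize.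
Qed.

Lemma Nsub_le_closed m n : M m -> m <=L n -> N n -> N m.
Proof.
by move=> Mm mn /Nsub_le_deltaX [j nj]; apply: Nsub_of_le_deltaX Mm (leL_trans mn nj).
Qed.

Lemma Hsub_mul x y : H x -> H y -> H (x * y).
Proof.
elim=> [|a b Da _ IH|a b Da _ IH] Hy; rewrite ?mul1g // -mulgA.
  exact: ggenM Da (IH Hy).
exact: ggenV Da (IH Hy).
Qed.

Lemma Hsub_Nsub x : N x -> H x.
Proof. by elim=> [|a b Da _ IH]; [apply: ggen1 | apply: ggenM Da IH]. Qed.

Lemma Hsub_inv x : H x -> H x^-1.
Proof.
have HV s : Div M d s -> H s^-1.
  by move=> Ds; rewrite -[s^-1]mulg1; apply: ggenV Ds (ggen1 _).
elim=> [|a b Da _ IH|a b Da _ IH]; first by rewrite invg1; apply: ggen1.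
  by rewrite invgM; apply: Hsub_mul IH (HV a Da).
by rewrite invgM invgK; apply: Hsub_mul IH (Hsub_Nsub (mgen_sub Da)).
Qed.

Lemma Hsub_mul2l h g : H h -> H (h * g) <-> H g.
Proof.
move=> Hh; split=> [Hhg | /(Hsub_mul Hh)] //.
by rewrite -(mulKg h g); apply: Hsub_mul (Hsub_inv Hh) Hhg.
Qed.

Lemma Hsub_deltaX_Nsub g : H g -> exists k, N (d ^+ k * g).
Proof.
elim=> [|x y Dx _ [k Nk]|x y Dx _ [k Nk]]; first by exists 0%N; rewrite mulg1; apply: mgen1.
  exists k; have := mgen_mul (Nsub_conj_deltaXV k (mgen_sub Dx)) Nk.
  by rewrite conjgE; gnormalize.
exists k.+1; have := mgen_mul (Nsub_conj_deltaXV k (mgen_sub (Div_complR bald Dx))) Nk.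
by rewrite expgSr conjgE; gnormalize.
Qed.

Lemma Hsub_interval g : H g <-> exists k, (d ^+ k)^-1 <=L g /\ g <=L d ^+ k.
Proof.
split=> [/Hsub_deltaX_Nsub [k Ng] | [k [lo_g g_hi]]].
  have [j gj] := Nsub_le_deltaX Ng.
  exists (j + k)%N; split.
    rewrite /leL invgK expgnDr -mulgA.
    exact: cone_mul (cone_expg j cone_delta) (Nsub_cone Ng).
  rewrite -(leL_mul2l (d ^+ k)) -expgnDr; apply: leL_trans gj _.
  by apply: leL_expg cone_delta _; rewrite addnCA leq_addr.
have Ng : N (d ^+ k * g).
  apply: (@Nsub_of_le_deltaX (k + k)); first by move: lo_g; rewrite /leL invgK.
  by rewrite expgnDr leL_mul2l.
exact: (Hsub_mul2l g (Hsub_Nsub (Nsub_deltaX k))).1 (Hsub_Nsub Ng).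
Qed.

Lemma Hsub_cone_Nsub g : H g -> M g -> N g.
Proof. by case/Hsub_interval=> k [_ g_hi] Mg; apply: Nsub_of_le_deltaX g_hi. Qed.

Lemma Hsub_join g1 g2 c : H g1 -> H g2 -> is_joinL M g1 g2 c -> H c.
Proof.
move=> /Hsub_interval [k1 [lo1 hi1]] /Hsub_interval [k2 [lo2 hi2]] join_c.
apply/Hsub_interval; exists (k1 + k2)%N; split.
  apply: leL_trans (joinL_l join_c).
  by apply: leL_trans lo1; apply: leL_expgV cone_delta (leq_addr _ _).
apply: joinL_min join_c _ _.
  by apply: leL_trans hi1 _; apply: leL_expg cone_delta (leq_addr _ _).
by apply: leL_trans hi2 _; apply: leL_expg cone_delta (leq_addl _ _).
Qed.

Lemma Hsub_meet g1 g2 c : H g1 -> H g2 -> is_meetL M g1 g2 c -> H c.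
Proof.
move=> /Hsub_interval [k1 [lo1 hi1]] /Hsub_interval [k2 [lo2 hi2]] meet_c.
apply/Hsub_interval; exists (k1 + k2)%N; split.
  apply: meetL_max meet_c _ _.
    by apply: leL_trans lo1; apply: leL_expgV cone_delta (leq_addr _ _).
  by apply: leL_trans lo2; apply: leL_expgV cone_delta (leq_addl _ _).
apply: leL_trans (meetL_l meet_c) _.
by apply: leL_trans hi1 _; apply: leL_expg cone_delta (leq_addr _ _).
Qed.

Lemma Hsub_le_Nreduced g a : H g -> is_meetL M a d 1 -> g <=L a -> g <=L 1.
Proof.
move=> Hg meet_a ga; have [c join_c] := (latM g 1).2.
have Mc : M c by rewrite -le1L; apply: joinL_r join_c.
have Nc : N c := Hsub_cone_Nsub (Hsub_join Hg (ggen1 _) join_c) Mc.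
have ca : c <=L a by apply: joinL_min join_c ga (meetL_l meet_a).
suff <- : c = 1 by apply: joinL_l join_c.
apply: NNPP => /(mgen_prefix (@Div_cone d) Nc) [s [Ds s1 sc]]; apply: s1.
apply: cone_anti (Div_cone Ds) _; rewrite -leL1.
by apply: meetL_max meet_a (leL_trans sc ca) _; case: Ds.
Qed.

Lemma omega_le_Div_mul s r : Div M d s -> M r -> omega <=L s * r -> omega <=L r.
Proof.
move=> Ds Mr om_sr; set s' := s ^ d^-1.
have Ds' : Div M d s' := Div_conjV bald Ds.
have D_s'dr : D <=L s' * (d * r).
  by rewrite /s' conjgE invgK !mulgA mulgVK -mulgA Delta_le_deltaE.
have om_dr : omega <=L d * r.
  apply: leL_trans (Nsub_omega_le (mgen_sub (Div_complL bald Ds'))) _.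
  by rewrite mulgA mulgK -leL_mulVl.
by rewrite -Delta_le_deltaE; apply: delta_omega_join (leL_mulr d Mr) om_dr.
Qed.

Lemma omega_le_Nsub_mul n r : N n -> M r -> omega <=L n * r -> omega <=L r.
Proof.
move=> Nn; elim: Nn r => [|s y Ds Ny IH] r Mr; first by rewrite mul1g.
rewrite -mulgA => /(omega_le_Div_mul Ds (cone_mul (Nsub_cone Ny) Mr)); exact: IH.
Qed.

Lemma omega_le_of_Hsub_le g a : H g -> M a -> g <=L a * D^-1 -> omega <=L a.
Proof.
case/Hsub_interval=> k [lo_g _] Ma ga.
apply: (omega_le_deltaX_mul (k := k) Ma); apply: leL_trans omega_le_Delta _.
have := cone_conjDX 1 (leL_trans lo_g ga); rewrite /leL expg1 conjgE.
by move=> M_dka; apply: cone_eq M_dka _; gnormalize.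
Qed.

Section Projection.
Variables (a : G) (Q : nat) (u beta : G).
Hypotheses (Ma : M a) (Nred_a : is_meetL M a d 1) (not_omega_a : ~ omega <=L a).
Hypotheses (Du : Div M D u) (Hbeta : H beta).

Local Notation q := Q.+1.
Local Notation theta := (a * (D ^+ q)^-1).
Local Notation gamma := (theta * u).

Hypothesis beta_near : Dlen_le (theta^-1 * beta) q.

Lemma Hsub_le_theta_DX g k : H g -> g <=L theta * D ^+ k -> (q <= k)%N.
Proof.
move=> Hg g_le; rewrite leqNgt; apply/negP => kQ; apply: not_omega_a.
apply: omega_le_of_Hsub_le Hg Ma (leL_trans g_le _).
have -> : a * D^-1 = theta * D ^+ Q by rewrite expgSr; gnormalize.
by rewrite leL_mul2l; apply: leL_expg cone_D _.
Qed.

Lemma Hsub_le_gamma_DX g k : H g -> g <=L gamma * D ^+ k -> (Q <= k)%N.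
Proof.
move=> Hg g_le; suff : (q <= k.+1)%N by [].
apply: Hsub_le_theta_DX Hg (leL_trans g_le _).
by rewrite -mulgA leL_mul2l expgS leL_mulDXr; apply: Du.2.
Qed.

Lemma theta_le_beta_le1 : theta <=L beta /\ beta <=L 1.
Proof.
have [j [k [jkq /DwithinE [lo hi]]]] := beta_near.
have qk := Hsub_le_theta_DX Hbeta hi.
have [j0 kq] : j = 0%N /\ k = q by lia.
move: lo hi; rewrite j0 kq invg1 mulg1 mulgVK => lo hi; split=> //.
exact: Hsub_le_Nreduced Hbeta Nred_a hi.
Qed.

Lemma Nsub_betaV : N beta^-1.
Proof. exact: Hsub_cone_Nsub (Hsub_inv Hbeta) ((leL1 _).1 theta_le_beta_le1.2). Qed.

Lemma gamma_le_betaD : gamma <=L beta * D.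
Proof.
apply: leL_trans (_ : theta * D <=L _); first by rewrite leL_mul2l; apply: Du.2.
by have := (leL_mulDXr 1 theta beta).2 theta_le_beta_le1.1; rewrite expg1.
Qed.

Lemma gammaDV_le_beta : gamma * D^-1 <=L beta.
Proof.
apply: leL_trans theta_le_beta_le1.1; rewrite -{2}[theta]mulg1 -mulgA leL_mul2l.
by rewrite leL1; apply: cone_eq (Div_coneR balD Du) _; gnormalize.
Qed.

Lemma cone_gammaDq : M (gamma * D ^+ q).
Proof.
apply: cone_eq (cone_mul Ma (cone_conjDX q (Div_cone Du))) _.
by rewrite conjgE; gnormalize.
Qed.

Definition Hwindow j k := exists2 g, H g & Dwithin (gamma^-1 * g) j k.

Lemma Hwindow_mono j k j' k' : Hwindow j k -> (j <= j')%N -> (k <= k')%N -> Hwindow j' k'.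
Proof. by case=> g Hg win jj kk; exists g => //; apply: Dwithin_mono win jj kk. Qed.

Lemma Dlen_le_gamma_lower m0 :
  (forall j k, (j + k < m0)%N -> (Q <= k)%N -> ~ Hwindow j k) ->
  forall g m, H g -> Dlen_le (gamma^-1 * g) m -> (m0 <= m)%N.
Proof.
move=> no_window g m Hg [j [k [jkm win]]]; rewrite leqNgt; apply/negP => m_lt.
apply: (no_window j k); [exact: leq_ltn_trans m_lt | | by exists g].
by apply: Hsub_le_gamma_DX Hg _; case/DwithinE: win.
Qed.

Lemma join_beta_gamma g0 : H g0 -> gamma <=L g0 -> exists b1,
  [/\ H b1, Dwithin (gamma^-1 * b1) 0 q, N (beta^-1 * b1) & Dlen_le (beta^-1 * b1) 1].
Proof.
move=> Hg0 g0_ge; have [b1 join_b1] := (latM beta gamma).2.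
have [c0 join_c0] := (latM beta g0).2.
have Nc0 : N (beta^-1 * c0).
  apply: Hsub_cone_Nsub (joinL_l join_c0).
  exact: Hsub_mul (Hsub_inv Hbeta) (Hsub_join Hbeta Hg0 join_c0).
have Nb1 : N (beta^-1 * b1).
  apply: Nsub_le_closed (joinL_l join_b1) _ Nc0; rewrite leL_mul2l.
  exact: joinL_min join_b1 (joinL_l join_c0) (leL_trans g0_ge (joinL_r join_c0)).
exists b1; split=> //.
- exact: (Hsub_mul2l b1 (Hsub_inv Hbeta)).1 (Hsub_Nsub Nb1).
- rewrite DwithinE invg1 mulg1; split; first exact: joinL_r join_b1.
  apply: joinL_min join_b1 _ (leL_mulr _ (cone_DX q)).
  exact: leL_trans theta_le_beta_le1.2 ((le1L _).2 cone_gammaDq).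
- exists 0%N, 1%N; split=> //; rewrite DwithinE invg1 mulg1 expg1.
  split; first exact: joinL_l join_b1.
  exact: joinL_min join_b1 (leL_mulr _ cone_D) gamma_le_betaD.
Qed.

Lemma descend_window c g0 l : H c -> N (beta^-1 * c) -> c <=L gamma * D ^+ q ->
  H g0 -> g0 <=L gamma * D ^+ Q -> l <=L c -> l <=L g0 ->
  exists c', [/\ H c', l <=L c', c' <=L gamma * D ^+ Q & Dlen_le (c^-1 * c') 1].
Proof.
move=> Hc Nc c_le Hg0 g0_le lc lg0.
(* ω <= c^-1 γΔ^(Q+1) says cδ^-1 <= γΔ^Q, which is what keeps c' below γΔ^Q. *)
have gammaDQ : gamma * D ^+ Q = gamma * D ^+ q * D^-1 by rewrite expgSr; gnormalize.
have om_b : omega <=L gamma * D ^+ q.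
  by apply: omega_le_of_Hsub_le Hg0 cone_gammaDq _; rewrite -gammaDQ.
have om_cb : omega <=L c^-1 * (gamma * D ^+ q).
  apply: omega_le_Nsub_mul Nc c_le _.
  rewrite (_ : _ * (c^-1 * _) = beta^-1 * (gamma * D ^+ q)); last by gnormalize.
  by apply: leL_trans (Nsub_omega_le Nsub_betaV) _; rewrite leL_mul2l.
have cd_le : c * d^-1 <=L gamma * D ^+ Q.
  rewrite gammaDQ /leL; apply: cone_eq (cone_conjDXV 1 om_cb) _.
  by rewrite expg1 conjgE; gnormalize.
have [j join_j] := (latM (c * d^-1) g0).2.
have [c' meet_c'] := (latM c j).1.
have Hj : H j.
  apply: Hsub_join _ Hg0 join_j; apply: Hsub_mul Hc (Hsub_inv (Hsub_Nsub (Nsub_deltaX 1))).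
have cd_c : c * d^-1 <=L c.
  by rewrite -{2}[c]mulg1 leL_mul2l leL1 invgK; apply: cone_delta.
exists c'; split.
- exact: Hsub_meet Hc Hj meet_c'.
- exact: meetL_max meet_c' lc (leL_trans lg0 (joinL_r join_j)).
- exact: leL_trans (meetL_r meet_c') (joinL_min join_j cd_le g0_le).
- exists 1%N, 0%N; split=> //; rewrite DwithinE expg1 mulg1; split; last exact: meetL_l meet_c'.
  apply: leL_trans (meetL_max meet_c' cd_c (joinL_l join_j)).
  by rewrite leL_mul2l /leL; apply: cone_eq (Div_coneR balD Div_Delta_delta) _; gnormalize.
Qed.

Lemma step_window_0Q : Hwindow 0 Q ->
  exists b', Dproj H gamma b' /\ Dlen_le (beta^-1 * b') 2.
Proof.
case=> g0 Hg0 /DwithinE; rewrite invg1 mulg1 => -[g0_ge g0_le].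
have [b1 [Hb1 /DwithinE [b1_ge b1_le] Nb1 span_b1]] := join_beta_gamma Hg0 g0_ge.
rewrite invg1 mulg1 in b1_ge.
have [c' [Hc' c'_ge c'_le span_c']] := descend_window Hb1 Nb1 b1_le Hg0 g0_le b1_ge g0_ge.
exists c'; split; last by have := Dlen_le_mul span_b1 span_c'; rewrite mulgA mulgK.
apply: (@Dproj_of_Dwithin _ _ _ 0 Q) Hc' _ _; first by rewrite DwithinE invg1 mulg1.
by apply: Dlen_le_gamma_lower => j k jkQ Qk; lia.
Qed.

Lemma Dlen_le_gamma_lower_q : ~ Hwindow 0 Q ->
  forall g m, H g -> Dlen_le (gamma^-1 * g) m -> (q <= m)%N.
Proof.
move=> no_0Q; apply: Dlen_le_gamma_lower => j k jkq Qk.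
by have [-> ->] : j = 0%N /\ k = Q by lia.
Qed.

Lemma step_window_0q : ~ Hwindow 0 Q -> Hwindow 0 q ->
  exists b', Dproj H gamma b' /\ Dlen_le (beta^-1 * b') 2.
Proof.
move=> no_0Q [g0 Hg0 /DwithinE]; rewrite invg1 mulg1 => -[g0_ge _].
have [b1 [Hb1 win_b1 _ span_b1]] := join_beta_gamma Hg0 g0_ge.
exists b1; split; last exact: Dlen_le_mono span_b1 _.
exact: Dproj_of_Dwithin Hb1 win_b1 (Dlen_le_gamma_lower_q no_0Q).
Qed.

Lemma step_window_1Q : ~ Hwindow 0 Q -> Hwindow 1 Q ->
  exists b', Dproj H gamma b' /\ Dlen_le (beta^-1 * b') 2.
Proof.
move=> no_0Q [g0 Hg0 /DwithinE]; rewrite expg1 => -[g0_ge g0_le].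
have Nb : N (beta^-1 * beta) by rewrite mulVg; apply: mgen1.
have b_le : beta <=L gamma * D ^+ q.
  exact: leL_trans theta_le_beta_le1.2 ((le1L _).2 cone_gammaDq).
have [c' [Hc' c'_ge c'_le span_c']] :=
  descend_window Hbeta Nb b_le Hg0 g0_le gammaDV_le_beta g0_ge.
exists c'; split; last exact: Dlen_le_mono span_c' _.
apply: (@Dproj_of_Dwithin _ _ _ 1 Q) Hc' _ (Dlen_le_gamma_lower_q no_0Q).
by rewrite DwithinE expg1.
Qed.

Lemma step_default : ~ Hwindow 0 q -> ~ Hwindow 1 Q -> Dproj H gamma beta.
Proof.
move=> no_0q no_1Q; split=> //; exists (1 + q)%N; split.
  have := Dlen_le_mul (Dlen_le_Div Du).2 beta_near; rewrite invgM; gnormalize.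
apply: Dlen_le_gamma_lower => j k jkq Qk win.
have [j0|j1] : j = 0%N \/ (j = 1 /\ k = Q)%N by lia.
  by apply: no_0q; apply: Hwindow_mono win _ _; lia.
by case: j1 => j1 kQ; subst j k; apply: no_1Q.
Qed.

Lemma step_proj : exists b', Dproj H gamma b' /\ Dlen_le (beta^-1 * b') 2.
Proof.
(* Windows meeting H have k >= Q, so d(γ, H) is Q, Q+1 or Q+2 = lg(γ^-1 β). *)
have [w0Q|no_0Q] := classic (Hwindow 0 Q); first exact: step_window_0Q.
have [w0q|no_0q] := classic (Hwindow 0 q); first exact: step_window_0q.
have [w1Q|no_1Q] := classic (Hwindow 1 Q); first exact: step_window_1Q.
exists beta; split; first exact: step_default.
by rewrite mulVg; apply: Dlen_le_mono Dlen_le1 _.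
Qed.

End Projection.

Lemma proj_mul_Div a Q u h beta (theta := a * (D ^+ Q.+1)^-1) :
  M a -> is_meetL M a d 1 -> ~ omega <=L a -> M theta^-1 -> Div M D u -> H h ->
  proj SD H (h * theta) beta ->
  exists2 beta', proj SD H (h * theta * u) beta' &
    exists n, dist SD beta beta' n /\ (n <= 2)%N.
Proof.
move=> Ma Nred_a not_omega_a M_thetaV Du Hh /proj_Dproj [Hbeta [n [span_n min_n]]].
(* d(hθ, h) = lg θ <= Q+1 bounds d(hθ, β). *)
have beta_near : Dlen_le (theta^-1 * (h^-1 * beta)) Q.+1.
  apply: Dlen_le_mono (_ : Dlen_le _ n) (min_n h _ Hh _).
    by move: span_n; rewrite invgM -mulgA.
  exists 0%N, Q.+1; split=> //; rewrite invgM mulgVK; split; rewrite /leL.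
    by apply: cone_eq M_thetaV _; gnormalize.
  by rewrite invgK /theta mulgVK.
have [b' [proj_b' span_b']] :=
  step_proj Ma Nred_a not_omega_a Du (Hsub_mul (Hsub_inv Hh) Hbeta) beta_near.
exists (h * b').
  apply/proj_Dproj.
  by have := Dproj_mul2l (fun g => Hsub_mul2l g Hh) proj_b'; rewrite !mulgA.
by apply: dist_of_Dlen_le; move: span_b'; rewrite invgM invgK -!mulgA.
Qed.

End Parabolic.

End Garside.

End PositiveCone.

Theorem lemma5p10 (G : groupType) (M : G -> Prop) (Delta delta : G)
  (hG : garside M Delta) (hP : parabolic M Delta delta)
  (alpha beta u theta : G) :
  let S := fun x => Div M Delta x /\ x <> 1 in
  let H := Hsub M delta in
  proj S H alpha beta ->
  S u ->
  HN_reduced M Delta delta theta ->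
  (forall g, rcoset H theta g <-> rcoset H alpha g) ->
  M (theta^-1) -> theta <> 1 ->
  exists beta', proj S H (alpha * u) beta' /\
    exists n, dist S beta beta' n /\ (n <= 3)%N.
Proof.
move=> S H proj_beta [Du _] red_theta coset_theta M_thetaV theta1.
have [coneM [balD [noethM [_ [genM [genG latM]]]]]] := hG.
have [_ bald Div_delta _] := hP.
have [a [Q [Ma Nred_a not_omega_a eq_theta]]] :=
  HN_reduced_negE coneM red_theta M_thetaV theta1.
subst theta.
have [h [Hh eq_alpha]] : rcoset H (a * (Delta ^+ Q.+1)^-1) alpha.
  by apply/coset_theta; exists 1; split; [apply: ggen1 | rewrite mul1g].
subst alpha.
have [beta' proj_beta' [n [dist_n le_n]]] := proj_mul_Div coneM balD genM latM genG bald
  Div_delta noethM Ma Nred_a not_omega_a M_thetaV Du Hh proj_beta.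
by exists beta'; split=> //; exists n; split=> //; apply: leq_trans le_n _.
Qed.
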